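(* Let $V$ be a real vector space of dimension $d$, and $G$ a group of affine-linear transformations of $V$ including all translations. Then: (1) $\mathcal{CB}_0(V,G)$ is a copy of $\mathbb{Z}$ generated by the class $[p]$ of any one-point convex body $p$. (2) For $i>0$, each $\mathcal{CB}_i(V,G)$ admits the structure of a Hausdorff topological vector space over $\mathbb{R}$, extending its structure as a topological abelian group, and with respect to this vector space structure the valuation $\Phi_i\colon\mathcal{K}(V)\to\mathcal{CB}_i(V,G)$ is homogeneous of degree $i$, i.e.\ $\Phi_i(\lambda X)=\lambda^i\Phi_i(X)$ for $\lambda\in[0,\infty)$, $X\in\mathcal{K}(V)$.
   Context: $\mathcal{K}(V)$ is the set of nonempty compact convex subsets of $V$ with the Hausdorff metric topology. $\mathcal{CB}(V,G)$ is the quotient (with quotient topology) of the free Hausdorff topological abelian group $\mathbb{Z}\mathcal{K}(V)$ on $\mathcal{K}(V)$ (the Hausdorff topological abelian group with continuous map $X\mapsto[X]$ through which every continuous map from $\mathcal{K}(V)$ to a Hausdorff topological abelian group factors uniquely via a continuous homomorphism) by the closure of the subgroup generated by all $[B\cup C]-[B]-[C]+[B\cap C]$ ($B,C,B\cup C\in\mathcal{K}(V)$) and all $[X]-[gX]$ ($g\in G$); images are still written $[X]$, and $\Phi(X)=[X]$. The dilation map $D\colon[0,\infty)\times\mathcal{CB}(V,G)\to\mathcal{CB}(V,G)$ is the unique continuous map that is a homomorphism in its second variable with $D(\lambda,[X])=[\lambda X]$. The dilation components are the uniquely determined continuous maps $\rho_0\colon\mathcal{CB}(V,G)\to\mathcal{CB}(V,G)$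 and $\rho_1,\ldots,\rho_d\colon[0,\infty)\times\mathcal{CB}(V,G)\to\mathcal{CB}(V,G)$ such that each $\rho_i(-,x)$ ($i\geqslant1$) is a semigroup homomorphism on $([0,\infty),+)$ and $D(\lambda,x)=\rho_0(x)+\sum_{i=1}^d\rho_i(\lambda^i,x)$. The McMullen idempotents are $e_0=\rho_0$ and $e_i(x)=\rho_i(1,x)$ for $i=1,\ldots,d$; they are continuous homomorphisms with $e_0+\cdots+e_d=\mathrm{id}$, $e_i^2=e_i$, $e_ie_j=0$ for $i\neq j$. Set $\mathcal{CB}_i(V,G)=e_i(\mathcal{CB}(V,G))$ (subspace topology), so $\mathcal{CB}(V,G)=\bigoplus_i\mathcal{CB}_i(V,G)$, and $\Phi_i=e_i\circ\Phi\colon\mathcal{K}(V)\to\mathcal{CB}_i(V,G)$. *)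

From HB Require Import structures.
From mathcomp Require Import all_boot all_order all_algebra.
From mathcomp Require Import all_classical all_reals all_analysis.
Set Implicit Arguments. Unset Strict Implicit. Unset Printing Implicit Defensive.
Import Order.TTheory GRing.Theory Num.Theory.
Import numFieldNormedType.Exports.
Local Open Scope classical_set_scope.
Local Open Scope ring_scope.

Section CB.
Variables (R : realType) (d : nat).
Local Notation V := 'rV[R]_d.

Definition is_convex_body (X : set V) : Prop :=
  X !=set0 /\ compact X /\ @convex_set R V X.

Definition Kbody := {X : set V | is_convex_body X}.

(* Hausdorff distance (for nonempty bounded sets) *)
Definition hdist (X Y : set V) : R :=
  Num.max (sup [set inf [set `|x - y| | y in Y] | x in X])
          (sup [set inf [set `|x - y| | x in X] | y in Y]).

Definition Kcontinuous (T : topologicalType) (f : Kbody -> T) : Prop :=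
  forall (X : Kbody) (U : set T), nbhs (f X) U ->
    exists2 e : R, 0 < e & forall Y : Kbody, hdist (sval X) (sval Y) < e -> U (f Y).

Definition affine_linear (g : V -> V) : Prop :=
  exists2 M : 'M[R]_d, M \in unitmx & exists b : V, forall x, g x = x *m M + b.

Definition affine_group_with_translations (G : set (V -> V)) : Prop :=
  [/\ forall g, G g -> affine_linear g,
      G id,
      forall g h, G g -> G h -> G (g \o h),
      forall g, G g -> exists2 h, G h & (h \o g = id /\ g \o h = id)
    & forall b : V, G (fun x => x + b)].

Definition free_hausdorff_group (F : topologicalZmodType) (iota : Kbody -> F) : Prop :=
  [/\ hausdorff_space F, Kcontinuous iota &
    forall (H : topologicalZmodType), hausdorff_space H ->
    forall f : Kbody -> H, Kcontinuous f ->
    exists g : F -> H,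
      ((forall x y, g (x - y) = g x - g y) /\ continuous g /\ g \o iota = f) /\
      forall g' : F -> H,
        ((forall x y, g' (x - y) = g' x - g' y) /\ continuous g' /\ g' \o iota = f) ->
        g' = g].

Definition gen_subgroup (F : zmodType) (S : set F) : set F :=
  [set x | forall T : set F, T 0 -> (forall a b, T a -> T b -> T (a - b)) ->
             S `<=` T -> T x].

Definition CB_relations (G : set (V -> V)) (F : zmodType) (iota : Kbody -> F) : set F :=
  [set x | (exists B C U I : Kbody,
               [/\ sval U = sval B `|` sval C, sval I = sval B `&` sval C &
                   x = iota U - iota B - iota C + iota I])
        \/ (exists (g : V -> V) (X Y : Kbody),
               [/\ G g, sval Y = g @` sval X & x = iota X - iota Y])].

Definition CB_quotient (G : set (V -> V)) (F : topologicalZmodType) (iota : Kbody -> F)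
    (A : topologicalZmodType) (q : F -> A) : Prop :=
  [/\ forall x y, q (x - y) = q x - q y,
      forall a : A, exists x, q x = a,
      (forall U : set A, open U <-> open (q @^-1` U)) &
      q @^-1` [set 0] = closure (gen_subgroup (CB_relations G iota))].

Definition is_dilation (A : topologicalZmodType) (Phi : Kbody -> A) (D : R -> A -> A) : Prop :=
  [/\ {within [set p : R * A | 0 <= p.1], continuous (fun p : R * A => D p.1 p.2)},
      forall lam x y, 0 <= lam -> D lam (x - y) = D lam x - D lam y &
      forall lam (X Y : Kbody), 0 <= lam -> sval Y = (fun v => lam *: v) @` sval X ->
        D lam (Phi X) = Phi Y].

Definition dilation_components (A : topologicalZmodType) (D : R -> A -> A)
    (rho0 : A -> A) (rho : nat -> R -> A -> A) : Prop :=
  [/\ continuous rho0,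
      forall i, (1 <= i <= d)%N ->
        {within [set p : R * A | 0 <= p.1], continuous (fun p : R * A => rho i p.1 p.2)},
      forall i, (1 <= i <= d)%N -> forall s t x, 0 <= s -> 0 <= t ->
        rho i (s + t) x = rho i s x + rho i t x &
      forall lam x, 0 <= lam ->
        D lam x = rho0 x + \sum_(1 <= i < d.+1) rho i (lam ^+ i) x].

Definition mcmullen (A : topologicalZmodType) (rho0 : A -> A) (rho : nat -> R -> A -> A)
    (i : nat) (x : A) : A :=
  if i == 0%N then rho0 x else rho i 1 x.

Definition CBi (A : topologicalZmodType) (rho0 : A -> A) (rho : nat -> R -> A -> A)
    (i : nat) : set A := range (mcmullen rho0 rho i).

Definition hausdorff_tvs_on (A : topologicalZmodType) (T : set A) (s : R -> A -> A) : Prop :=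
  [/\ (forall a x, T x -> T (s a x)) /\
      (forall a b x, T x -> s a (s b x) = s (a * b) x),
      (forall x, T x -> s 1 x = x) /\
      (forall a x y, T x -> T y -> s a (x + y) = s a x + s a y),
      forall a b x, T x -> s (a + b) x = s a x + s b x,
      ({within [set p : R * A | T p.2], continuous (fun p : R * A => s p.1 p.2)}) &
      forall x y, T x -> T y -> x <> y ->
        exists U W : set A, [/\ open U, open W, U x, W y & U `&` W = set0]].

End CB.

(* Two facts about [CB(V,G)] drive everything: it is Hausdorff (the quotient is
   by a closed subgroup), and a continuous homomorphism out of it is determined
   by its values on the classes [X].  Evaluating [D lam = rho_0 + sum_i rho_i (lam^i)]
   at [lam] and [2 lam] shows that the coefficients of such additive
   polynomials in [lam] are unique; applied to [D lam (x - y)],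
   [D lam (D mu x)] and [rho_i s (D mu x)] this makes each [rho_i s] additive
   with [rho_i s (rho_j t x) = delta_ij rho_i (s t) x].
   (1) [rho_0 = D 0] maps every [X] to the point [0 X], a translate of [p];
   the Euler characteristic, a continuous homomorphism to the discrete
   integers with value 1 on every [X], then gives [rho_0 x = chi x * [p]].
   (2) [a . x := rho_i a^+ x - rho_i a^- x] extends the action
   [t . x = rho_i t x] of [[0, oo)] to a continuous linear action of [R],
   and [rho_i 1 (D lam x) = rho_i (lam^i) x] is homogeneity of degree [i]. *)

From HB Require Import structures.
From mathcomp Require Import all_boot all_order all_algebra.
From mathcomp Require Import all_classical all_reals all_analysis.
From mathcomp Require Import ring lra.
Set Implicit Arguments. Unset Strict Implicit. Unset Printing Implicit Defensive.
Import Order.TTheory GRing.Theory Num.Theory.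
Import numFieldNormedType.Exports.
Local Open Scope classical_set_scope.
Local Open Scope ring_scope.

Section ZmodMorphism.
Variables (M N : zmodType) (f : M -> N).
Hypothesis fB : zmod_morphism f.

Let phi : {additive M -> N} := HB.pack f (GRing.isZmodMorphism.Build M N f fB).

Lemma zmod_morphism0 : f 0 = 0. Proof. exact: (raddf0 phi). Qed.
Lemma zmod_morphismD : {morph f : x y / x + y}. Proof. exact: (raddfD phi). Qed.
Lemma zmod_morphismMz n : {morph f : x / x *~ n}. Proof. exact: (raddfMz phi). Qed.
Lemma zmod_morphism_sum (I : Type) (r : seq I) (P : pred I) (F : I -> M) :
  f (\sum_(i <- r | P i) F i) = \sum_(i <- r | P i) f (F i).
Proof. exact: (raddf_sum phi). Qed.

End ZmodMorphism.

Section NonnegAdditive.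
Variables (R : realDomainType) (M : zmodType).

Definition nonneg_additive (g : R -> M) :=
  forall s t, 0 <= s -> 0 <= t -> g (s + t) = g s + g t.

Lemma nonneg_additive0 g : nonneg_additive g -> g 0 = 0.
Proof.
by move=> gD; apply: (addrI (g 0)); rewrite addr0 -gD ?addr0.
Qed.

Lemma nonneg_additiveMn g s n : nonneg_additive g -> 0 <= s -> g (s *+ n) = g s *+ n.
Proof.
move=> gD s0; elim: n => [|n IH]; first by rewrite !mulr0n nonneg_additive0.
by rewrite !mulrS gD ?IH ?mulrn_wge0.
Qed.

(* The unique additive extension of [g] to all of [R], via [a = a^+ - a^-]. *)
Definition signed_ext (g : R -> M) (a : R) : M :=
  g (Num.max a 0) - g (Num.max (- a) 0).

Lemma max0_ge0 (a : R) : 0 <= Num.max a 0.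
Proof. by rewrite le_max lexx orbT. Qed.

Lemma max0_sub (a : R) : Num.max a 0 - Num.max (- a) 0 = a.
Proof.
case: (leP 0 a) => a0; first by rewrite (max_idPr _) ?subr0 // oppr_le0.
by rewrite (max_idPl _) ?sub0r ?opprK // oppr_ge0 ltW.
Qed.

Variables (g : R -> M).
Hypothesis gD : nonneg_additive g.

Lemma signed_extE a : 0 <= a -> signed_ext g a = g a.
Proof.
move=> a0; rewrite /signed_ext (max_idPl a0) (max_idPr _) ?oppr_le0 //.
by rewrite (nonneg_additive0 gD) subr0.
Qed.

Lemma signed_ext_subE u v : 0 <= u -> 0 <= v -> signed_ext g (u - v) = g u - g v.
Proof.
move=> u0 v0; have uv := max0_sub (u - v).
have e : Num.max (u - v) 0 + v = Num.max (- (u - v)) 0 + u by lra.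
have := congr1 g e; rewrite !gD ?max0_ge0 // /signed_ext.
set X := g (Num.max _ 0); set Y := g (Num.max _ 0) => eXY.
by rewrite -[X](addrK (g v)) eXY addrAC [Y + _]addrC addrK.
Qed.

Lemma signed_extB : zmod_morphism (signed_ext g).
Proof.
move=> a b.
have -> : a - b = (Num.max a 0 + Num.max (- b) 0) - (Num.max (- a) 0 + Num.max b 0).
  by rewrite -[a in LHS]max0_sub -[b in LHS]max0_sub; ring.
rewrite signed_ext_subE ?addr_ge0 ?max0_ge0 // !gD ?max0_ge0 //.
by rewrite /signed_ext opprD opprB !addrA; congr (_ - _); exact: addrAC.
Qed.

End NonnegAdditive.

Section AdditivePoly.
Variables (R : realType) (M : zmodType).
Implicit Types (f : nat -> R -> M).

Lemma nonneg_root n (t : R) : 0 <= t -> exists2 l : R, 0 <= l & l ^+ n.+1 = t.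
Proof.
move=> t0; exists (t `^ n.+1%:R^-1); first exact: powR_ge0.
by rewrite -powR_mulrn ?powR_ge0 // -powRrM mulVf ?pnatr_eq0 // powRr1.
Qed.

(* Subtracting the identity at [2 lam] from [2 ^ n.+1] times the identity at
   [lam] kills the top-degree term. *)
Lemma additive_poly_top_elim n f :
  (forall i, (1 <= i <= n.+1)%N -> nonneg_additive (f i)) ->
  (forall lam, 0 <= lam -> \sum_(1 <= i < n.+2) f i (lam ^+ i) = 0) ->
  forall lam, 0 <= lam -> \sum_(1 <= i < n.+1) f i (lam ^+ i) *+ (2 ^ n.+1 - 2 ^ i) = 0.
Proof.
move=> fD poly0 lam l0.
have fMn i : (1 <= i <= n.+1)%N -> f i ((2 * lam) ^+ i) = f i (lam ^+ i) *+ 2 ^ i.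
  by move=> hi; rewrite exprMn -natrX mulr_natl nonneg_additiveMn ?exprn_ge0 //; apply: fD.
transitivity (\sum_(1 <= i < n.+2) f i (lam ^+ i) *+ (2 ^ n.+1 - 2 ^ i)).
  by rewrite [RHS]big_nat_recr //= subnn mulr0n addr0.
transitivity ((\sum_(1 <= i < n.+2) f i (lam ^+ i)) *+ 2 ^ n.+1 -
              \sum_(1 <= i < n.+2) f i ((2 * lam) ^+ i)); last first.
  by rewrite poly0 // poly0 ?mulr_ge0 // mul0rn subr0.
rewrite -sumrMnl -sumrB; apply: eq_big_nat => i /andP[i1 iN].
have iN' : (i <= n.+1)%N by rewrite -ltnS.
by rewrite fMn ?i1 // mulrnBr // leq_exp2l.
Qed.

Lemma additive_poly_eq0 n f :
  (forall i, (1 <= i <= n)%N -> nonneg_additive (f i)) ->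
  (forall lam, 0 <= lam -> \sum_(1 <= i < n.+1) f i (lam ^+ i) = 0) ->
  forall i, (1 <= i <= n)%N -> forall t, 0 <= t -> f i t = 0.
Proof.
elim: n f => [|n IH] f fD poly0 i; first by case/andP => /leq_trans h /h.
have low j : (1 <= j <= n)%N -> forall t, 0 <= t -> f j t = 0.
  move=> /andP[j1 jn] t t0; set m := (2 ^ n.+1 - 2 ^ j)%N.
  have m0 : (0 < m)%N by rewrite subn_gt0 ltn_exp2l.
  have -> : t = (t / m%:R) *+ m by rewrite -mulr_natr divfK // pnatr_eq0 -lt0n.
  rewrite nonneg_additiveMn ?divr_ge0 //; last by apply: fD; rewrite j1 leqW.
  apply: (IH (fun k s => f k s *+ (2 ^ n.+1 - 2 ^ k)%N)); rewrite ?j1 ?divr_ge0 //.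
    move=> k /andP[k1 kn] s u s0 u0.
    by rewrite fD ?k1 ?(leqW kn) // mulrnDl.
  by apply: additive_poly_top_elim.
case/andP => i1; rewrite leq_eqVlt => /orP[/eqP -> t t0 | ilt]; last first.
  by apply: low; rewrite i1 -ltnS.
have [l l0 <-] := nonneg_root n t0.
have := poly0 l l0; rewrite big_nat_recr //= big_nat big1 ?add0r // => j /andP[j1 jn].
by apply: low; [rewrite j1 -ltnS | exact: exprn_ge0].
Qed.

Lemma additive_poly_inj n (c1 c2 : M) f1 f2 :
  (forall i, (1 <= i <= n)%N -> nonneg_additive (f1 i)) ->
  (forall i, (1 <= i <= n)%N -> nonneg_additive (f2 i)) ->
  (forall lam, 0 <= lam -> c1 + \sum_(1 <= i < n.+1) f1 i (lam ^+ i) =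
                           c2 + \sum_(1 <= i < n.+1) f2 i (lam ^+ i)) ->
  forall i, (1 <= i <= n)%N -> forall t, 0 <= t -> f1 i t = f2 i t.
Proof.
move=> f1D f2D E i hi t t0.
have sum0 f : (forall i, (1 <= i <= n)%N -> nonneg_additive (f i)) ->
    \sum_(1 <= i < n.+1) f i (0 ^+ i) = 0.
  move=> fD; rewrite big_nat big1 // => -[//|j] /andP[_ jn].
  by rewrite expr0n nonneg_additive0 //; apply: fD.
have c12 : c1 = c2 by have := E 0 (lexx 0); rewrite !sum0 ?addr0.
apply/eqP; rewrite -subr_eq0; apply/eqP.
apply: (additive_poly_eq0 (f := fun i s => f1 i s - f2 i s)) hi t t0 => [j hj s u s0 u0|lam l0].
  by rewrite f1D ?f2D // opprD addrACA.
by rewrite sumrB; apply/eqP; rewrite subr_eq0; apply/eqP; apply: (addrI c1); rewrite {2}c12 E.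
Qed.

End AdditivePoly.

Section DilationComponents.
Variables (R : realType) (d : nat) (A : zmodType) (D : R -> A -> A)
  (rho0 : A -> A) (rho : nat -> R -> A -> A).
Hypothesis rhoD : forall i, (1 <= i <= d)%N -> forall s t x, 0 <= s -> 0 <= t ->
  rho i (s + t) x = rho i s x + rho i t x.
Hypothesis D_decomp : forall lam x, 0 <= lam ->
  D lam x = rho0 x + \sum_(1 <= i < d.+1) rho i (lam ^+ i) x.
Hypothesis DB : forall lam x y, 0 <= lam -> D lam (x - y) = D lam x - D lam y.

Lemma rho_nonneg_additive i x : (1 <= i <= d)%N -> nonneg_additive (fun s => rho i s x).
Proof. by move=> hi s t s0 t0; apply: rhoD. Qed.

Lemma rho0E x : rho0 x = D 0 x.
Proof.
rewrite D_decomp // big_nat big1 ?addr0 // => -[//|i] /andP[_ iN].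
by rewrite expr0n (nonneg_additive0 (rho_nonneg_additive x _)).
Qed.

Lemma rho0B : zmod_morphism rho0.
Proof. by move=> x y; rewrite !rho0E DB. Qed.

Lemma rhoB i s : (1 <= i <= d)%N -> 0 <= s -> zmod_morphism (rho i s).
Proof.
move=> hi s0 x y.
apply: (@additive_poly_inj R A d (rho0 (x - y)) (rho0 x - rho0 y)
  (fun j s => rho j s (x - y)) (fun j s => rho j s x - rho j s y)) => //.
- by move=> j hj; apply: rho_nonneg_additive.
- by move=> j hj u v u0 v0 /=; rewrite !rhoD // opprD addrACA.
- by move=> lam l0; rewrite -D_decomp // DB // !D_decomp // sumrB opprD addrACA.
Qed.

Hypothesis DM : forall lam mu x, 0 <= lam -> 0 <= mu -> D lam (D mu x) = D (lam * mu) x.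

Lemma rho_dilation i s mu x : (1 <= i <= d)%N -> 0 <= s -> 0 <= mu ->
  rho i s (D mu x) = rho i (s * mu ^+ i) x.
Proof.
move=> hi s0 m0.
apply: (@additive_poly_inj R A d (rho0 (D mu x)) (rho0 x)
  (fun j s => rho j s (D mu x)) (fun j s => rho j (s * mu ^+ j) x)) => //.
- by move=> j hj; apply: rho_nonneg_additive.
- by move=> j hj u v u0 v0 /=; rewrite mulrDl rhoD // mulr_ge0 ?exprn_ge0.
- move=> lam l0; rewrite -D_decomp // DM // D_decomp ?mulr_ge0 //.
  by congr (_ + _); apply: eq_bigr => j _; rewrite exprMn.
Qed.

Lemma rho_comp i j s t x : (1 <= i <= d)%N -> (1 <= j <= d)%N -> 0 <= s -> 0 <= t ->
  rho i s (rho j t x) = if j == i then rho i (s * t) x else 0.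
Proof.
move=> hi hj s0 t0; have rsB := rhoB hi s0.
apply: (@additive_poly_inj R A d (rho i s (rho0 x)) 0
  (fun j t => rho i s (rho j t x))
  (fun j t => if j == i then rho i (s * t) x else 0)) => //.
- by move=> k hk u v u0 v0 /=; rewrite rhoD // (zmod_morphismD rsB).
- move=> k hk u v u0 v0 /=; case: eqP => _; last by rewrite addr0.
  by rewrite mulrDr rhoD // mulr_ge0.
- move=> mu m0 /=; rewrite -(zmod_morphism_sum rsB) -(zmod_morphismD rsB) -D_decomp //.
  rewrite rho_dilation // add0r (bigD1_seq i) ?mem_index_iota ?iota_uniq //= eqxx.
  by rewrite big1 ?addr0 // => k /negbTE ->.
Qed.

End DilationComponents.

Lemma continuous_comp_within (T U W : topologicalType) (S : set T) (f : T -> W)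
    (g : U -> T) :
  {within S, continuous f} -> continuous g -> (forall u, S (g u)) ->
  continuous (f \o g).
Proof.
move=> fc gc gS u V nV.
have : within S (nbhs (g u)) (f @^-1` V).
  by rewrite nbhs_subspace_in ?inE //; exact: fc.
move=> SV; have gSV : nbhs u [set v | S (g v) -> V (f (g v))] := gc u _ SV.
by apply: filterS gSV => v /(_ (gS v)).
Qed.

Lemma continuous_pairl (T U : topologicalType) (a : T) :
  continuous (fun x : U => (a, x)).
Proof. by move=> x; apply: cvg_pair; [exact: cvg_cst | exact: cvg_id]. Qed.

Lemma continuous_map_fst (T1 T2 U : topologicalType) (f : T1 -> U) :
  continuous f -> continuous (fun p : T1 * T2 => (f p.1, p.2)).
Proof.
move=> fc p; apply: cvg_pair; last exact: cvg_snd.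
exact: (continuous_comp cvg_fst (fc _)).
Qed.

Lemma continuous_subr (T : topologicalType) (M : topologicalZmodType) (f g : T -> M) :
  continuous f -> continuous g -> continuous (fun x => f x - g x).
Proof.
move=> fc gc x.
apply: (@continuous_comp _ _ _ (fun x => (f x, g x)) (fun p : M * M => p.1 - p.2)).
  by apply: cvg_pair; [exact: fc | exact: gc].
exact: sub_continuous.
Qed.

Lemma discrete_continuous (X : discreteTopologicalType) (T : topologicalType)
    (f : X -> T) :
  continuous f.
Proof.
move=> x V nV; apply: (@filterS _ (nbhs x) _ [set x]); last exact: discrete_set1.
by move=> _ ->; exact: nbhs_singleton nV.
Qed.

Section CBQuotient.
Variables (R : realType) (d : nat) (G : set ('rV[R]_d -> 'rV[R]_d))
  (F : topologicalZmodType) (iota : Kbody R d -> F)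
  (A : topologicalZmodType) (q : F -> A).
Hypothesis hq : CB_quotient G iota q.

Lemma quotient_map_continuous : continuous q.
Proof. by case: hq => _ _ qo _; apply/continuousP => U oU; apply/qo. Qed.

Lemma quotient_map_open U : open U -> open (q @` U).
Proof.
case: hq => qB _ qo _ oU; apply/qo; rewrite openE => x [u Uu qux].
pose k := x - u.
have shift_cont : continuous (fun y : F => y - k).
  by apply: continuous_subr => [y|]; [exact: cvg_id | exact: cst_continuous].
have Uk : nbhs (x - k) U by rewrite /k opprB addrC subrK; exact: open_nbhs_nbhs.
have xU : nbhs x [set y | U (y - k)] := shift_cont x _ Uk.
apply: filterS xU => y /= Uyk; exists (y - k) => //.
by rewrite qB /k qB qux subrr subr0.
Qed.

Lemma quotient_nbhs_image a P : nbhs a P -> nbhs (q a) (q @` P).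
Proof.
rewrite nbhsE; case=> O [oO Oa] OP; apply: filterS (image_subset q OP) _.
by apply: open_nbhs_nbhs; split; [exact: quotient_map_open | exists a].
Qed.

(* The kernel of [q] is closed, so it suffices that every neighbourhood of
   [a - b] meets it. *)
Lemma quotient_hausdorff : hausdorff_space A.
Proof.
case: hq => qB qs _ qk x y; have [a <-] := qs x; have [b <-] := qs y => qa_qb.
apply/eqP; rewrite -subr_eq0 -qB; apply/eqP.
have kerE : q @^-1` [set 0] = closure (q @^-1` [set 0]).
  by apply/closure_id; rewrite qk; exact: closed_closure.
change ((q @^-1` [set 0]) (a - b)); rewrite kerE => W /(@sub_continuous F (a, b)).
case=> -[P Q] /= [aP bQ] PQW.
have [_ [[u Pu <-] [v Qv quv]]] :=
  qa_qb _ _ (quotient_nbhs_image aP) (quotient_nbhs_image bQ).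
by exists (u - v); split; [rewrite /= qB quv subrr | exact: (PQW (u, v))].
Qed.

Lemma CB_relation_eq0 x : CB_relations G iota x -> q x = 0.
Proof.
case: hq => _ _ _ qk rel; change ((q @^-1` [set 0]) x); rewrite qk.
by apply: subset_closure => T _ _; apply.
Qed.

Lemma quotient_lift (H : topologicalZmodType) (g : F -> H) :
  closed [set 0 : H] -> zmod_morphism g -> continuous g ->
  (forall x, CB_relations G iota x -> g x = 0) ->
  exists chi : A -> H, [/\ zmod_morphism chi, continuous chi & forall x, chi (q x) = g x].
Proof.
case: hq => qB qs qo qk H0 gB gc grel.
have ker_sub x : q x = 0 -> g x = 0.
  have /closure_id kerg : closed (g @^-1` [set 0]) by exact: (continuous_closedP g).1.
  have : closure (gen_subgroup (CB_relations G iota)) `<=` g @^-1` [set 0].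
    rewrite kerg; apply: closureS => y; apply; first exact: zmod_morphism0.
      by move=> a b /= ga gb; rewrite gB ga gb subrr.
    exact: grel.
  by move=> + qx0; apply; rewrite -qk.
pose chi a := g (sval (cid (qs a))).
have chiq x : chi (q x) = g x.
  rewrite /chi; case: cid => y /= qyx; apply/eqP; rewrite -subr_eq0 -gB.
  by apply/eqP/ker_sub; rewrite qB qyx subrr.
exists chi; split=> // [a b|].
  by have [x <-] := qs a; have [y <-] := qs b; rewrite -qB !chiq gB.
apply/continuousP => U oU; apply/qo.
have -> : q @^-1` (chi @^-1` U) = g @^-1` U by apply/seteqP; split=> x /=; rewrite chiq.
exact: (continuousP g).1 gc U oU.
Qed.

Hypothesis hF : free_hausdorff_group iota.

Lemma CB_hom_ext (H : topologicalZmodType) (f1 f2 : A -> H) :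
  hausdorff_space H -> zmod_morphism f1 -> zmod_morphism f2 ->
  continuous f1 -> continuous f2 ->
  (forall X, f1 (q (iota X)) = f2 (q (iota X))) -> forall a, f1 a = f2 a.
Proof.
move=> hH f1B f2B f1c f2c f12 a.
case: hF => _ iotac univ; case: hq => qB qs _ _.
have qc := quotient_map_continuous.
have f1qc : Kcontinuous (f1 \o q \o iota).
  move=> X U nU; apply: (iotac X (q @^-1` (f1 @^-1` U))).
  exact: qc _ _ (f1c _ _ nU).
have [g [_ g_uniq]] := univ H hH _ f1qc.
have E1 : f1 \o q = g.
  apply: g_uniq; split; first by move=> x y /=; rewrite qB f1B.
  by split=> // x; apply: continuous_comp; [exact: qc | exact: f1c].
have E2 : f2 \o q = g.
  apply: g_uniq; split; first by move=> x y /=; rewrite qB f2B.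
  split; first by move=> x; apply: continuous_comp; [exact: qc | exact: f2c].
  by apply: funext => X /=; rewrite f12.
have [x <-] := qs a.
by have := congr1 (fun g => g x) (etrans E1 (esym E2)).
Qed.

End CBQuotient.

Section ScaleBody.
Variables (R : realType) (d : nat).
Local Open Scope convex_scope.

Lemma is_convex_body_scale (lam : R) (X : set 'rV[R]_d) :
  is_convex_body X -> is_convex_body ((fun v => lam *: v) @` X).
Proof.
case=> -[x Xx] [cX vX]; split; first by exists (lam *: x); exists x.
split.
  apply: continuous_compact cX; apply: continuous_subspaceT => v.
  by apply: continuousZl_tmp; exact: cvg_id.
move=> a b t /set_mem [a' Xa' <-] /set_mem [b' Xb' <-]; apply/mem_set.
exists ((a' : convex_lmodType 'rV[R]_d) <| t |> b').
  by apply/set_mem; apply: vX; apply/mem_set.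
by rewrite /conv /= scalerDr !scalerA (mulrC lam) (mulrC lam).
Qed.

Lemma Kbody_scale (lam : R) (X : Kbody R d) :
  {Y : Kbody R d | sval Y = (fun v => lam *: v) @` sval X}.
Proof. by exists (exist _ _ (is_convex_body_scale lam (svalP X))). Qed.

End ScaleBody.

Local Notation Zd := (discrete_topology int).
HB.instance Definition _ := GRing.Zmodule.on Zd.

Lemma Zd_sub_continuous : continuous (fun x : Zd * Zd => x.1 - x.2).
Proof.
move=> [a b] V nV; exists ([set a], [set b]); first by split; exact: discrete_set1.
by move=> [x y] [/= -> ->]; exact: nbhs_singleton nV.
Qed.

HB.instance Definition _ :=
  PreTopologicalNmodule_isTopologicalZmodule.Build Zd Zd_sub_continuous.

Section CBTheorem.
Variables (R : realType) (d : nat) (G : set ('rV[R]_d -> 'rV[R]_d))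
  (F : topologicalZmodType) (iota : Kbody R d -> F)
  (A : topologicalZmodType) (q : F -> A) (D : R -> A -> A)
  (rho0 : A -> A) (rho : nat -> R -> A -> A).
Hypotheses (hG : affine_group_with_translations G) (hF : free_hausdorff_group iota)
  (hq : CB_quotient G iota q) (hD : is_dilation (q \o iota) D)
  (hrho : dilation_components d D rho0 rho).

Local Notation Phi X := (q (iota X)).

Let DB : forall lam x y, 0 <= lam -> D lam (x - y) = D lam x - D lam y.
Proof. by case: hD. Qed.

Let D_Phi : forall lam (X Y : Kbody R d), 0 <= lam ->
  sval Y = (fun v => lam *: v) @` sval X -> D lam (Phi X) = Phi Y.
Proof. by case: hD. Qed.

Let rhoD : forall i, (1 <= i <= d)%N -> forall s t x, 0 <= s -> 0 <= t ->
  rho i (s + t) x = rho i s x + rho i t x.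
Proof. by case: hrho. Qed.

Let D_decomp : forall lam x, 0 <= lam ->
  D lam x = rho0 x + \sum_(1 <= i < d.+1) rho i (lam ^+ i) x.
Proof. by case: hrho. Qed.

Lemma dilation_continuous lam : 0 <= lam -> continuous (D lam).
Proof.
case: hD => Dc _ _ l0.
have pair_cont : continuous (fun x : A => (lam, x)) := @continuous_pairl _ A lam.
exact: (continuous_comp_within Dc pair_cont (fun _ => l0)).
Qed.

Lemma dilationM lam mu x : 0 <= lam -> 0 <= mu -> D lam (D mu x) = D (lam * mu) x.
Proof.
move=> l0 m0; have lm0 := mulr_ge0 l0 m0.
apply: (CB_hom_ext hq hF (quotient_hausdorff hq)
  (f1 := fun a => D lam (D mu a)) (f2 := D (lam * mu))) => [a b|a b|a|a|X].
- by rewrite !DB.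
- exact: DB.
- by apply: continuous_comp; apply: dilation_continuous.
- exact: dilation_continuous.
have [Y hY] := Kbody_scale mu X; have [Z hZ] := Kbody_scale lam Y.
rewrite (D_Phi m0 hY) (D_Phi l0 hZ) (D_Phi lm0 (X := X) (Y := Z)) // hZ hY.
by rewrite image_comp; apply: eq_imagel => v _ /=; rewrite scalerA.
Qed.

(* [0 X] is the point [0], a translate of [P]. *)
Lemma rho0_Phi (P : Kbody R d) (p : 'rV[R]_d) : sval P = [set p] ->
  forall X, rho0 (Phi X) = Phi P.
Proof.
move=> hP X; rewrite (rho0E rhoD D_decomp); have [Y hY] := Kbody_scale 0 X.
have Y0 : sval Y = [set 0].
  rewrite hY; case: X {hY} => X [[x Xx] _] /=; apply/seteqP; split=> v /=.
    by case=> w _ <-; rewrite scale0r.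
  by move=> ->; exists x => //; rewrite scale0r.
rewrite (D_Phi (lexx 0) hY); apply/eqP; rewrite eq_sym -subr_eq0.
case: hq => qB _ _ _; rewrite -qB; apply/eqP/(CB_relation_eq0 hq); right.
exists (fun v => v + (- p)), P, Y; split=> //; first by case: hG.
by rewrite Y0 hP image_set1 subrr.
Qed.

Lemma euler_characteristic :
  exists chi : A -> Zd, [/\ zmod_morphism chi, continuous chi & forall X, chi (Phi X) = 1].
Proof.
have one_cont : Kcontinuous (fun _ : Kbody R d => 1 : Zd).
  by move=> X U nU; exists 1 => // Y _; exact: nbhs_singleton nU.
case: hF => _ _ /(_ Zd discrete_hausdorff _ one_cont) [g [[gB [gc g1]] _]].
have gX X : g (iota X) = 1 := congr1 (fun f => f X) g1.
have [|chi [chiB chic chiq]] := quotient_lift (H := Zd) hq (discrete_closed _) gB gc.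
  move=> x [[B [C [U [I [_ _ ->]]]]] | [h [X [Y [_ _ ->]]]]].
    by rewrite (zmod_morphismD gB) !gB !gX.
  by rewrite gB !gX subrr.
by exists chi; split=> // X; rewrite chiq gX.
Qed.

Lemma CB0_infinite_cyclic (P : Kbody R d) (p : 'rV[R]_d) : sval P = [set p] ->
  (forall x, CBi rho0 rho 0 x <-> exists n : int, x = Phi P *~ n) /\
  injective (fun n : int => Phi P *~ n).
Proof.
move=> hP; have [chi [chiB chic chi1]] := euler_characteristic.
have r0B := rho0B rhoD D_decomp DB.
have rho0_chi a : rho0 a = Phi P *~ chi a.
  apply: (CB_hom_ext hq hF (quotient_hausdorff hq)
    (f2 := fun a => Phi P *~ chi a)) => // [x y|||X].
  - by rewrite chiB mulrzBr.
  - by case: hrho.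
  - by move=> x; apply: continuous_comp; [exact: chic | exact: discrete_continuous].
  - by rewrite (rho0_Phi hP) chi1.
split=> [x|m n /(congr1 chi)]; last by rewrite !(zmod_morphismMz chiB) chi1 !intz.
split=> [[y _ <-]|[n ->]]; first by exists (chi y); rewrite /mcmullen rho0_chi.
by exists (Phi P *~ n) => //; rewrite /mcmullen /= (zmod_morphismMz r0B) (rho0_Phi hP).
Qed.

Section Homogeneous.
Variable i : nat.
Hypothesis hi : (1 <= i <= d)%N.

Definition CB_scale (a : R) (x : A) : A := signed_ext (fun t => rho i t x) a.

Let rho_i_additive x := rho_nonneg_additive rhoD x hi.
Let rho_iB s := rhoB rhoD D_decomp DB (s := s) hi.

Lemma mcmullenE x : mcmullen rho0 rho i x = rho i 1 x.
Proof. by case: i hi. Qed.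

Lemma CB_scale_nonneg a x : 0 <= a -> CB_scale a x = rho i a x.
Proof. exact: signed_extE. Qed.

Lemma CB_scaleBl x : zmod_morphism (CB_scale ^~ x).
Proof. exact: signed_extB. Qed.

Lemma CB_scaleBr a : zmod_morphism (CB_scale a).
Proof. by move=> x y; rewrite /CB_scale /signed_ext !rho_iB ?max0_ge0 // !opprD addrACA. Qed.

Lemma rho_CB_scale t a x : 0 <= t -> rho i t (CB_scale a x) = CB_scale (t * a) x.
Proof.
move=> t0; rewrite {1}/CB_scale /signed_ext rho_iB ?max0_ge0 //.
rewrite !(rho_comp rhoD D_decomp DB dilationM) ?max0_ge0 // eqxx.
by rewrite -(signed_ext_subE (rho_i_additive x)) ?mulr_ge0 ?max0_ge0 // -mulrBr max0_sub.
Qed.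

Lemma CB_scaleA a b x : CB_scale a (CB_scale b x) = CB_scale (a * b) x.
Proof.
rewrite {1}/CB_scale /signed_ext !rho_CB_scale ?max0_ge0 //.
by rewrite -(CB_scaleBl x) /= -mulrBl max0_sub.
Qed.

Lemma CBi_scale_closed a x : CBi rho0 rho i x -> CBi rho0 rho i (CB_scale a x).
Proof.
case=> z _ <-; exists (CB_scale a z) => //.
by rewrite !mcmullenE rho_CB_scale // mul1r -CB_scale_nonneg // CB_scaleA mulr1.
Qed.

Lemma CB_scale_continuous : continuous (fun p : R * A => CB_scale p.1 p.2).
Proof.
have rho_c : {within [set p : R * A | 0 <= p.1], continuous (fun p => rho i p.1 p.2)}.
  by case: hrho => _ rho_c _ _; exact: rho_c.
have rho_part_c (h : R -> R) : continuous h -> (forall a, 0 <= h a) ->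
    continuous (fun p : R * A => rho i (h p.1) p.2).
  move=> hc h0; have hpc : continuous (fun p : R * A => (h p.1, p.2)).
    exact: continuous_map_fst.
  exact: (continuous_comp_within rho_c hpc (fun p => h0 p.1)).
have max0c (h : R -> R) : continuous h -> continuous (fun a => Num.max (h a) 0).
  by move=> hc a; apply: (@continuous_max _ R h (fun=> 0) a); [exact: hc | exact: cvg_cst].
rewrite /CB_scale /signed_ext; apply: continuous_subr.
  exact: (rho_part_c _ (max0c id (fun a => cvg_id)) (@max0_ge0 R)).
exact: (rho_part_c _ (max0c -%R (fun a => cvgN cvg_id)) (fun a => max0_ge0 (- a))).
Qed.

Lemma CBi_tvs : hausdorff_tvs_on (CBi rho0 rho i) CB_scale.
Proof.
split.
- by split=> [a x|a b x _]; [exact: CBi_scale_closed | exact: CB_scaleA].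
- split=> [x [z _ <-]|a x y _ _]; last exact: (zmod_morphismD (CB_scaleBr a)).
  by rewrite mcmullenE -CB_scale_nonneg // CB_scaleA mulr1.
- by move=> a b x _; exact: (zmod_morphismD (CB_scaleBl x)).
- exact/continuous_subspaceT/CB_scale_continuous.
move=> x y _ _ /eqP; have := quotient_hausdorff hq; rewrite open_hausdorff => /[apply].
by case=> -[U W] /= [xU yW] [oU oW /eqP UW]; exists U, W; split=> //; rewrite -inE.
Qed.

Lemma mcmullen_Phi_homogeneous lam (X Y : Kbody R d) : 0 <= lam ->
  sval Y = (fun v => lam *: v) @` sval X ->
  mcmullen rho0 rho i (Phi Y) = CB_scale (lam ^+ i) (mcmullen rho0 rho i (Phi X)).
Proof.
move=> l0 hY; rewrite !mcmullenE -(D_Phi l0 hY).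
rewrite (rho_dilation rhoD D_decomp dilationM) // mul1r.
by rewrite -!CB_scale_nonneg ?exprn_ge0 // CB_scaleA mulr1.
Qed.

End Homogeneous.

End CBTheorem.



Theorem theorem6p6 (R : realType) (d : nat) (G : set ('rV[R]_d -> 'rV[R]_d))
    (hG : affine_group_with_translations G)
    (F : topologicalZmodType) (iota : Kbody R d -> F) (hF : free_hausdorff_group iota)
    (A : topologicalZmodType) (q : F -> A) (hq : CB_quotient G iota q)
    (D : R -> A -> A) (hD : is_dilation (q \o iota) D)
    (rho0 : A -> A) (rho : nat -> R -> A -> A) (hrho : dilation_components d D rho0 rho) :
  (forall (P : Kbody R d) (p : 'rV[R]_d), sval P = [set p] ->
     (forall x : A, CBi rho0 rho 0 x <-> exists n : int, x = q (iota P) *~ n) /\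
     injective (fun n : int => q (iota P) *~ n)) /\
  (forall i : nat, (1 <= i <= d)%N ->
     exists s : R -> A -> A,
       hausdorff_tvs_on (CBi rho0 rho i) s /\
       forall (lam : R) (X Y : Kbody R d), 0 <= lam ->
         sval Y = (fun v => lam *: v) @` sval X ->
         mcmullen rho0 rho i (q (iota Y)) = s (lam ^+ i) (mcmullen rho0 rho i (q (iota X)))).
Proof.
split=> [P p hP | i hi]; first exact: (CB0_infinite_cyclic hG hF hq hD hrho hP).
exists (CB_scale rho i); split; first exact: (CBi_tvs hF hq hD hrho hi).
by move=> lam X Y; exact: (mcmullen_Phi_homogeneous hF hq hD hrho hi).
Qed.
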